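(* For any $(a,b,c,\lambda),(\bar a,\bar b,\bar c,\bar\lambda)\in(\mathbb F^\times)^4$ the following are equivalent: (i) $(a,b,c,\lambda)\approx(\bar a,\bar b,\bar c,\bar\lambda)$; (ii) there is a $\triangle_q$-module homomorphism $M_\lambda(a,b,c)\to M_{\bar\lambda}(\bar a,\bar b,\bar c)$ sending $m_0$ to $\bar m_0$; (iii) there is a $\triangle_q$-module homomorphism $M_{\bar\lambda}(\bar a,\bar b,\bar c)\to M_\lambda(a,b,c)$ sending $\bar m_0$ to $m_0$; (iv) there is a $\triangle_q$-module isomorphism $M_\lambda(a,b,c)\to M_{\bar\lambda}(\bar a,\bar b,\bar c)$ sending $m_0$ to $\bar m_0$; (v) there is a $\triangle_q$-module isomorphism $M_{\bar\lambda}(\bar a,\bar b,\bar c)\to M_\lambda(a,b,c)$ sending $\bar m_0$ to $m_0$.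
   Context: $\mathbb F$ is an algebraically closed field and $q\in\mathbb F^\times$ a root of unity of order $d\notin\{1,2,4\}$. $\sqrt{x}$ denotes a fixed square root. $\triangle_q$ is the unital associative $\mathbb F$-algebra with generators $A,B,C$ subject to: each of $A+\frac{qBC-q^{-1}CB}{q^2-q^{-2}}$, $B+\frac{qCA-q^{-1}AC}{q^2-q^{-2}}$, $C+\frac{qAB-q^{-1}BA}{q^2-q^{-2}}$ is central; $\alpha,\beta,\gamma$ are these times $q+q^{-1}$. For $(a,b,c,\lambda)\in(\mathbb F^\times)^4$, $i\in\mathbb N$: $\theta_i=a\lambda^{-1}q^{2i}+a^{-1}\lambda q^{-2i}$, $\theta_i^*=b\lambda^{-1}q^{2i}+b^{-1}\lambda q^{-2i}$, $\varphi_i=a^{-1}b^{-1}\lambda q(q^i-q^{-i})(\lambda^{-1}q^{i-1}-\lambda q^{1-i})(q^{-i}-abc\lambda^{-1}q^{i-1})(q^{-i}-abc^{-1}\lambda^{-1}q^{i-1})$. $M_\lambda(a,b,c)$ is the $\triangle_q$-module with basis $\{m_i\}_{i\in\mathbb N}$, $(A-\theta_i)m_i=m_{i+1}$, $(B-\theta_i^* )m_i=\varphi_im_{i-1}$, with $\alpha,\beta,\gamma$ acting as $(b+b^{-1})(c+c^{-1})+(a+a^{-1})(\lambda q+\lambda^{-1}q^{-1})$, $(c+c^{-1})(a+a^{-1})+(b+b^{-1})(\lambda q+\lambda^{-1}q^{-1})$, $(a+a^{-1})(b+b^{-1})+(c+c^{-1})(\lambda q+\lambda^{-1}q^{-1})$;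 $\{\bar m_i\}$ denotes the corresponding basis of $M_{\bar\lambda}(\bar a,\bar b,\bar c)$. $\{\pm1\}$ acts on $(\mathbb F^\times)^4$ by $(-1)\cdot(a,b,c,\lambda)=(-a,-b,-c,-\lambda)$; with $[\cdot]$ the $\{\pm1\}$-orbit, $\mathfrak S_4$ acts on the right by $[a,b,c,\lambda](1\,2)=[a,b,c^{-1},\lambda]$, $[a,b,c,\lambda](3\,4)=[a^{-1},b,c,\lambda]$, $[a,b,c,\lambda](2\,3)=[a/s,b/s,c/s,\lambda/s]$, $s=\sqrt{abc\lambda q}$; $\approx$ means the $\{\pm1\}$-orbits lie in the same $\mathfrak S_4$-orbit. *)

From HB Require Import structures.
From mathcomp Require Import all_boot all_order all_algebra.
From Stdlib Require Import Relations.
Set Implicit Arguments. Unset Strict Implicit. Unset Printing Implicit Defensive.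
Import Order.TTheory GRing.Theory Num.Theory.
Local Open Scope ring_scope.

Definition par (F : Type) := (F * F * F * F)%type.

Section Module.
Variables (F : closedFieldType) (q : F).

Definition pa (p : par F) := p.1.1.1.
Definition pb (p : par F) := p.1.1.2.
Definition pc (p : par F) := p.1.2.
Definition pl (p : par F) := p.2.

Definition theta (p : par F) (i : nat) : F :=
  pa p / pl p * q ^+ (2 * i) + (pa p)^-1 * pl p / q ^+ (2 * i).
Definition thetas (p : par F) (i : nat) : F :=
  pb p / pl p * q ^+ (2 * i) + (pb p)^-1 * pl p / q ^+ (2 * i).
Definition phi (p : par F) (i : nat) : F :=
  let a := pa p in let b := pb p in let c := pc p in let l := pl p in
  a^-1 * b^-1 * l * q * (q ^+ i - q ^- i)
  * (l^-1 * (q ^+ i / q) - l * (q / q ^+ i))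
  * (q ^- i - a * b * c / l * (q ^+ i / q))
  * (q ^- i - a * b / c / l * (q ^+ i / q)).

Definition gammav (p : par F) : F :=
  (pa p + (pa p)^-1) * (pb p + (pb p)^-1)
  + (pc p + (pc p)^-1) * (pl p * q + (pl p)^-1 * q^-1).

(* M_lambda(a,b,c) is modelled on {poly F}: the basis vector m_i is 'X^i. *)
Definition actA (p : par F) (v : {poly F}) : {poly F} :=
  \sum_(i < size v) v`_i *: (theta p i *: 'X^i + 'X^(i.+1)).
Definition actB (p : par F) (v : {poly F}) : {poly F} :=
  \sum_(i < size v) v`_i *: (thetas p i *: 'X^i + phi p i *: 'X^(i.-1)).
(* C is determined by the requirement that
   C + (qAB - q^-1 BA)/(q^2 - q^-2) acts as gamma/(q + q^-1). *)
Definition actC (p : par F) (v : {poly F}) : {poly F} :=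
  (gammav p / (q + q^-1)) *: v
  - (q^+2 - q^-2)^-1 *: (q *: actA p (actB p v) - q^-1 *: actB p (actA p v)).

Definition is_hom (p p' : par F) (f : {poly F} -> {poly F}) : Prop :=
  [/\ forall (k : F) (u v : {poly F}), f (k *: u + v) = k *: f u + f v,
      forall v, f (actA p v) = actA p' (f v),
      forall v, f (actB p v) = actB p' (f v) &
      forall v, f (actC p v) = actC p' (f v)].

Definition is_iso (p p' : par F) (f : {poly F} -> {poly F}) : Prop :=
  is_hom p p' f /\ bijective f.

(* The relation ~ : one step of the {+-1} action or of one of the
   generators (1 2), (3 4), (2 3) of S_4 (on representatives).  For
   (2 3) any square root s of abc lambda q may be used: the two choices
   differ by the {+-1} action. *)
Definition approx_step (x y : par F) : Prop :=
  let: (a, b, c, l) := x in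
  [\/ y = (- a, - b, - c, - l),
      y = (a, b, c^-1, l),
      y = (a^-1, b, c, l) |
      exists s : F, s ^+ 2 = a * b * c * l * q /\ y = (a / s, b / s, c / s, l / s)].

Definition approx : par F -> par F -> Prop := clos_refl_trans (par F) approx_step.

End Module.

From HB Require Import structures.
From mathcomp Require Import all_boot all_order all_algebra ring.
From Stdlib Require Import Relations.
Set Implicit Arguments. Unset Strict Implicit. Unset Printing Implicit Defensive.
Import GRing.Theory.
Local Open Scope ring_scope.

(* A homomorphism M(p) -> M(p') fixing m_0 commutes with A, and
   m_(i+1) = (A - theta_i) m_i, so it can only be the A-intertwiner T sending
   m_0 to m_0, which is bijective with inverse the intertwiner in the other
   direction.  T commutes with B iff the defect D = B'T - TB vanishes.  The
   beta-relation of the algebra, with C eliminated through the gamma-relation,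
   is an identity in A and B only; transported along T it yields a two-step
   recursion for D on the basis (m_i), so D = 0 as soon as D m_0 = D m_1 = 0
   and the gamma and beta scalars agree.  Hence a homomorphism, or equivalently
   an isomorphism, fixing m_0 exists iff the five scalars theta*_0, theta*_1,
   phi_1 + theta_0 (theta*_0 - theta*_1), gamma and beta agree.
   As q^4 <> 1, these scalars carry the same information as x = b/lambda and
   the multiset u = {c/lambda, 1/(c lambda), abq, bq/a}.  The generators of S_4
   fix x and act on u as adjacent transpositions, which generate all
   permutations, and (x, u) determines (a, b, c, lambda) up to sign; so equal
   scalars amount to ~. *)

Section PolyLinear.
Variable R : nzRingType.

Definition polyext (w : nat -> {poly R}) (v : {poly R}) : {poly R} :=
  \sum_(i < size v) v`_i *: w i.

Lemma polyextE w (v : {poly R}) n : (size v <= n)%N ->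
  polyext w v = \sum_(i < n) v`_i *: w i.
Proof.
move=> hn; rewrite /polyext (big_ord_widen n (fun i => v`_i *: w i) hn) big_mkcond /=.
by apply: eq_bigr => i _; case: ltnP => // /(nth_default 0) ->; rewrite scale0r.
Qed.

Lemma polyext_is_linear w : linear (polyext w).
Proof.
move=> k u v; pose n := (size u + size v)%N.
have hu : (size u <= n)%N by rewrite leq_addr.
have hv : (size v <= n)%N by rewrite leq_addl.
have huv : (size (k *: u + v)%R <= n)%N.
  by rewrite (leq_trans (size_polyD _ _)) // geq_max hv (leq_trans (size_scale_leq _ _)).
rewrite !(polyextE _ hu, polyextE _ hv, polyextE _ huv) scaler_sumr -big_split.
by apply: eq_bigr => i _; rewrite coefD coefZ scalerDl scalerA.
Qed.

HB.instance Definition _ w :=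
  GRing.isLinear.Build R {poly R} {poly R} *:%R (polyext w) (polyext_is_linear w).

Lemma polyextX w i : polyext w 'X^i = w i.
Proof.
rewrite (polyextE _ (leqnn _)) size_polyXn big_ord_recr /= coefXn eqxx scale1r.
by rewrite big1 ?add0r // => j _; rewrite coefXn ltn_eqF ?scale0r.
Qed.

Lemma linear_polyP (V : lmodType R) (f g : {linear {poly R} -> V}) :
  (forall i, f 'X^i = g 'X^i) -> f =1 g.
Proof.
move=> eqfg v; rewrite -[v]coefK poly_def !linear_sum.
by apply: eq_bigr => i _; rewrite !linearZ eqfg.
Qed.

Lemma scale1_poly_eq0 (x : R) : x *: (1 : {poly R}) = 0 -> x = 0.
Proof. by move/eqP; rewrite alg_polyC polyC_eq0 => /eqP. Qed.

Lemma scaleX_add_scale1_eq0 (u w : R) : u *: 'X + w *: 1 = 0 :> {poly R} -> u = 0 /\ w = 0.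
Proof.
move=> h; split; [have := congr1 (coefp 1) h | have := congr1 (coefp 0) h];
  by rewrite /= coefD !coefZ coefX coef1 coef0 /= ?(mulr0, mulr1, addr0, add0r).
Qed.

End PolyLinear.

Section Actions.
Variables (F : closedFieldType) (q : F).
Implicit Types (p : par F) (v : {poly F}).

Lemma actA_is_linear p : linear (actA q p).
Proof.
by have -> : actA q p = polyext (fun i => theta q p i *: 'X^i + 'X^(i.+1)) by [];
  exact: polyext_is_linear.
Qed.
HB.instance Definition _ p :=
  GRing.isLinear.Build F {poly F} {poly F} *:%R (actA q p) (actA_is_linear p).

Lemma actB_is_linear p : linear (actB q p).
Proof.
by have -> : actB q p = polyext (fun i => thetas q p i *: 'X^i + phi q p i *: 'X^(i.-1)) by [];
  exact: polyext_is_linear.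
Qed.
HB.instance Definition _ p :=
  GRing.isLinear.Build F {poly F} {poly F} *:%R (actB q p) (actB_is_linear p).

Lemma actAX p i : actA q p 'X^i = theta q p i *: 'X^i + 'X^(i.+1).
Proof. exact: (polyextX (fun i => theta q p i *: 'X^i + 'X^(i.+1))). Qed.

Lemma actBX p i : actB q p 'X^i = thetas q p i *: 'X^i + phi q p i *: 'X^(i.-1).
Proof. exact: (polyextX (fun i => thetas q p i *: 'X^i + phi q p i *: 'X^(i.-1))). Qed.

Lemma phi0 p : phi q p 0 = 0.
Proof. by rewrite /phi expr0 invr1 subrr !(mulr0, mul0r). Qed.

Lemma actA1 p : actA q p 1 = theta q p 0 *: 1 + 'X.
Proof. by rewrite -(expr0 'X) actAX. Qed.

Lemma actB1 p : actB q p 1 = thetas q p 0 *: 1.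
Proof. by rewrite -(expr0 'X) actBX phi0 scale0r addr0. Qed.

Lemma actBX1 p : actB q p 'X = thetas q p 1 *: 'X + phi q p 1 *: 1.
Proof. by rewrite -(expr1 'X) actBX expr0. Qed.

(* Where an A-intertwiner M(p) -> M(p') fixing m_0 has to send m_i. *)
Fixpoint tbasis p p' i : {poly F} :=
  if i is i.+1 then actA q p' (tbasis p p' i) - theta q p i *: tbasis p p' i else 1.

Definition transfer p p' := polyext (tbasis p p').
HB.instance Definition _ p p' := GRing.Linear.on (transfer p p').

Lemma transferX p p' i : transfer p p' 'X^i = tbasis p p' i.
Proof. exact: polyextX. Qed.

Lemma transfer1 p p' : transfer p p' 1 = 1.
Proof. by rewrite -(expr0 'X) transferX. Qed.

Lemma transferA p p' v : transfer p p' (actA q p v) = actA q p' (transfer p p' v).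
Proof.
apply: (@linear_polyP _ _ (transfer p p' \o actA q p) (actA q p' \o transfer p p')) => i /=.
by rewrite actAX linearD linearZ /= (transferX p p' i) transferX /= addrC subrK.
Qed.

Lemma intertwinerA_unique p p' (f : {linear {poly F} -> {poly F}}) :
  (forall v, f (actA q p v) = actA q p' (f v)) -> f 1 = 1 -> f =1 transfer p p'.
Proof.
move=> fA f1; apply: linear_polyP => i /=; rewrite transferX.
elim: i => [|i IH]; first by rewrite expr0.
have -> : 'X^(i.+1) = actA q p 'X^i - theta q p i *: 'X^i by rewrite actAX addrC addKr.
by rewrite linearB linearZ fA IH.
Qed.

Lemma transfer_id p v : transfer p p v = v.
Proof. by rewrite -(intertwinerA_unique (f := idfun)). Qed.

Lemma transferK p p' : cancel (transfer p p') (transfer p' p).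
Proof.
move=> v; rewrite -[RHS](transfer_id p).
by apply: (intertwinerA_unique (f := transfer p' p \o transfer p p')) => [w|] /=;
  rewrite ?transferA ?transfer1.
Qed.

Lemma transfer_bij p p' : bijective (transfer p p').
Proof. by exists (transfer p' p); apply: transferK. Qed.

Definition defectB p p' :=
  (actB q p' \o transfer p p') \- (transfer p p' \o actB q p).
HB.instance Definition _ p p' := GRing.Linear.on (defectB p p').

Lemma defectBE p p' v :
  defectB p p' v = actB q p' (transfer p p' v) - transfer p p' (actB q p v).
Proof. by []. Qed.

End Actions.

Section Module.
Variables (F : closedFieldType) (q : F).
Hypotheses (hq : q != 0) (hq4 : q ^+ 4 != 1).
Implicit Types (p : par F) (v : {poly F}).

Local Notation rho := (q ^+ 2 + q ^- 2).
Local Notation kap := (q ^+ 2 - q ^- 2).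

Lemma sqrqD1_neq0 : q ^+ 2 + 1 != 0.
Proof.
apply: contraNneq hq4 => h.
have -> : q ^+ 4 = (q ^+ 2 + 1) * (q ^+ 2 - 1) + 1 by ring.
by rewrite h mul0r add0r.
Qed.

Lemma sqrqB1_neq0 : q ^+ 2 - 1 != 0.
Proof.
apply: contraNneq hq4 => h.
have -> : q ^+ 4 = (q ^+ 2 - 1) * (q ^+ 2 + 1) + 1 by ring.
by rewrite h mul0r add0r.
Qed.

Lemma qDqV_neq0 : q + q^-1 != 0.
Proof.
have -> : q + q^-1 = (q ^+ 2 + 1) / q by field.
by rewrite mulf_neq0 ?invr_eq0 ?sqrqD1_neq0.
Qed.

Lemma kap_neq0 : kap != 0.
Proof.
have -> : kap = (q ^+ 4 - 1) / q ^+ 2 by field.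
by rewrite mulf_neq0 ?invr_eq0 ?expf_neq0 ?subr_eq0.
Qed.

Definition betav p := (pc p + (pc p)^-1) * (pa p + (pa p)^-1)
  + (pb p + (pb p)^-1) * (pl p * q + (pl p)^-1 * q^-1).

Local Notation gamma_sc p := (gammav q p / (q + q^-1)).
Local Notation beta_sc p := (betav p / (q + q^-1)).

(* [beta_rel p] is kap^2 (B + (qCA - q^-1AC)/kap - beta/(q + q^-1)), with C
   eliminated through the definition of [actC]. *)
Definition beta_rel p v :=
  actA q p (actA q p (actB q p v)) - rho *: actA q p (actB q p (actA q p v))
  + actB q p (actA q p (actA q p v)) + kap ^+ 2 *: actB q p v
  + (kap * (q - q^-1) * gamma_sc p) *: actA q p v - (kap ^+ 2 * beta_sc p) *: v.

Lemma beta_rel_is_linear p : linear (beta_rel p).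
Proof.
by move=> k u v; rewrite /beta_rel !(linearP (actA q p), linearP (actB q p)) /= -!mul_polyC; ring.
Qed.
HB.instance Definition _ p :=
  GRing.isLinear.Build F {poly F} {poly F} *:%R (beta_rel p) (beta_rel_is_linear p).

Lemma tridiag_expand (A B : {linear {poly F} -> {poly F}}) (n m0 m1 m2 : {poly F})
    (t0 t1 t2 s1 s2 s3 f1 f2 f3 g b : F) :
  A n = t0 *: n + f1 *: m0 -> A m0 = t1 *: m0 + m1 -> A m1 = t2 *: m1 + m2 ->
  B m0 = s1 *: m0 + n -> B m1 = s2 *: m1 + f2 *: m0 -> B m2 = s3 *: m2 + f3 *: m1 ->
  A (A (B m0)) - rho *: A (B (A m0)) + B (A (A m0)) + kap ^+ 2 *: B m0
    + g *: A m0 - b *: m0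
  = (t0 ^+ 2 - rho * t0 * t1 + t1 ^+ 2 + kap ^+ 2) *: n
  + (s1 * t1 ^+ 2 + f1 * (t0 + t1) - rho * (t1 ^+ 2 * s1 + t1 * f1 + t1 * f2)
     + t1 ^+ 2 * s1 + (t1 + t2) * f2 + kap ^+ 2 * s1 + g * t1 - b) *: m0
  + (s1 * (t1 + t2) + f1 - rho * (t1 * s1 + s2 * t2 + f2) + (t1 + t2) * s2 + f3 + g) *: m1
  + (s1 - rho * s2 + s3) *: m2.
Proof.
move=> An A0 A1 B0 B1 B2; rewrite B0 A0.
do 4 rewrite ?linearD ?linearZ /= ?(An, A0, A1, B0, B1, B2).
by rewrite -!mul_polyC; ring.
Qed.

Section BetaRelation.
Variables (a b c l : F).
Hypotheses (ha : a != 0) (hb : b != 0) (hc : c != 0) (hl : l != 0).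
Local Notation p := (a, b, c, l).

Local Notation th Q := (a / l * Q ^+ 2 + a^-1 * l / Q ^+ 2).
Local Notation ths Q := (b / l * Q ^+ 2 + b^-1 * l / Q ^+ 2).
Local Notation ph Q := (a^-1 * b^-1 * l * q * (Q - Q^-1) * (l^-1 * (Q / q) - l * (q / Q))
  * (Q^-1 - a * b * c / l * (Q / q)) * (Q^-1 - a * b / c / l * (Q / q))).

Lemma thetaE i : theta q p i = th (q ^+ i).
Proof. by rewrite /theta /= mulnC exprM. Qed.

Lemma thetasE i : thetas q p i = ths (q ^+ i).
Proof. by rewrite /thetas /= mulnC exprM. Qed.

Lemma phiE i : phi q p i = ph (q ^+ i).
Proof. by []. Qed.

(* The four coefficients of [tridiag_expand] at m_i = 'X^i, in terms of Q = q^i. *)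
Lemma beta_rel_coefs (Q : F) : Q != 0 -> [/\
  th (Q / q) ^+ 2 - rho * th (Q / q) * th Q + th Q ^+ 2 + kap ^+ 2 = 0,
  ths Q * th Q ^+ 2 + ph Q * (th (Q / q) + th Q)
    - rho * (th Q ^+ 2 * ths Q + th Q * ph Q + th Q * ph (Q * q))
    + th Q ^+ 2 * ths Q + (th Q + th (Q * q)) * ph (Q * q) + kap ^+ 2 * ths Q
    + kap * (q - q^-1) * gamma_sc p * th Q - kap ^+ 2 * beta_sc p = 0,
  ths Q * (th Q + th (Q * q)) + ph Q
    - rho * (th Q * ths Q + ths (Q * q) * th (Q * q) + ph (Q * q))
    + (th Q + th (Q * q)) * ths (Q * q) + ph (Q * q * q)
    + kap * (q - q^-1) * gamma_sc p = 0 &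
  ths Q - rho * ths (Q * q) + ths (Q * q * q) = 0].
Proof.
move=> hQ; rewrite /gammav /betav /pa /pb /pc /pl /=.
by split; field; rewrite -?expr2 ?sqrqD1_neq0 ?hq ?hQ ?ha ?hb ?hc ?hl.
Qed.

(* For i = 0 the index i.-1 is junk, which is harmless as phi_0 = 0. *)
Lemma actA_phiX i : actA q p (phi q p i *: 'X^(i.-1))
  = th (q ^+ i / q) *: (phi q p i *: 'X^(i.-1)) + phi q p i *: 'X^i.
Proof.
case: i => [|i]; first by rewrite phi0 !scale0r linear0 scaler0 addr0.
rewrite linearZ /= actAX scalerDr !scalerA [phi _ _ _ * _]mulrC.
by rewrite (exprSr q) mulfK // thetaE.
Qed.

Lemma beta_relX i : beta_rel p 'X^i = 0.
Proof.
rewrite /beta_rel (tridiag_expand _ _ (actA_phiX i) (actAX q p i) (actAX q p i.+1)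
  (actBX q p i) (actBX q p i.+1) (actBX q p i.+2)).
have [] := beta_rel_coefs (expf_neq0 i hq).
rewrite !thetaE !thetasE !phiE !exprSr => -> -> -> ->.
by rewrite !scale0r !addr0.
Qed.

Lemma beta_rel0 v : beta_rel p v = 0.
Proof. by apply: (@linear_polyP _ _ (beta_rel p) \0) => i /=; rewrite beta_relX. Qed.

End BetaRelation.

Definition tau p := phi q p 1 + theta q p 0 * (thetas q p 0 - thetas q p 1).

Definition hom_data p := (thetas q p 0, thetas q p 1, tau p, gammav q p, betav p).

Section Transfer.
Variables (a b c l a' b' c' l' : F).
Hypotheses (ha : a != 0) (hb : b != 0) (hc : c != 0) (hl : l != 0).
Hypotheses (ha' : a' != 0) (hb' : b' != 0) (hc' : c' != 0) (hl' : l' != 0).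
Local Notation p := (a, b, c, l).
Local Notation p' := (a', b', c', l').
Local Notation T := (transfer q p p').
Local Notation D := (defectB q p p').
Local Notation A := (actA q p).
Local Notation A' := (actA q p').

Lemma defectB1 : D 1 = (thetas q p' 0 - thetas q p 0) *: 1.
Proof. by rewrite defectBE transfer1 !actB1 linearZ /= transfer1 scalerBl. Qed.

Lemma defectBX : D 'X = (thetas q p' 1 - thetas q p 1) *: 'X
  + (tau p' - tau p + theta q p' 0 * (thetas q p' 1 - thetas q p 1)
     - theta q p 0 * (thetas q p' 0 - thetas q p 0)) *: 1.
Proof.
have TX : T 'X = 'X + (theta q p' 0 - theta q p 0) *: 1.
  by rewrite -[in LHS](expr1 'X) transferX /= actA1 scalerBl addrAC addrC.
rewrite defectBE actBX1 linearD !linearZ /= transfer1 TX linearD linearZ /= actBX1 actB1.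
by rewrite /tau -!mul_polyC; ring.
Qed.

Lemma defectB_rel v :
  A' (A' (D v)) - rho *: A' (D (A v)) + D (A (A v)) + kap ^+ 2 *: D v
  = (kap * (q - q^-1) * (gamma_sc p - gamma_sc p')) *: A' (T v)
    + (kap ^+ 2 * (beta_sc p' - beta_sc p)) *: T v.
Proof.
apply/eqP; rewrite -subr_eq0 -(beta_rel0 ha' hb' hc' hl' (T v)).
rewrite -[X in _ == X]subr0 -(linear0 T) -(beta_rel0 ha hb hc hl v) /beta_rel !defectBE.
rewrite !(linearD T, linearB T, linearN T, linearZ_LR T) /= !transferA.
rewrite !(linearD A', linearB A', linearN A', linearZ_LR A') /= -!mul_polyC.
by apply/eqP; ring.
Qed.

Lemma defectB01P : D 1 = 0 /\ D 'X = 0 <->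
  [/\ thetas q p 0 = thetas q p' 0, thetas q p 1 = thetas q p' 1 & tau p = tau p'].
Proof.
rewrite defectB1 defectBX; split=> [[/scale1_poly_eq0/subr0_eq eq0]|[-> -> ->]].
  rewrite eq0 subrr mulr0 subr0 => /scaleX_add_scale1_eq0 [/subr0_eq eq1].
  by rewrite eq1 subrr mulr0 addr0 => /subr0_eq.
by rewrite !(subrr, mulr0, subr0, scale0r, addr0).
Qed.

(* [defectB_rel] determines D m_(i+2) from D m_i and D m_(i+1). *)
Lemma defectB_eq0 : gammav q p = gammav q p' -> betav p = betav p' ->
  D 1 = 0 -> D 'X = 0 -> D =1 \0.
Proof.
move=> eqg eqb D0 D1; apply: linear_polyP => i /=.
suff [] : D 'X^i = 0 /\ D 'X^(i.+1) = 0 by [].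
elim: i => [|i [IH0 IH1]]; first by rewrite expr0 expr1.
split=> //; have := defectB_rel 'X^i.
rewrite eqg eqb !subrr !mulr0 !scale0r addr0 !actAX !(linearD A, linearZ_LR A) /= !actAX.
rewrite !(linearD D, linearZ_LR D) /= IH0 IH1.
by rewrite !(linear0 A', scaler0, add0r, addr0, subr0) oppr0 add0r.
Qed.

Lemma transferB : D =1 \0 -> forall v, T (actB q p v) = actB q p' (T v).
Proof. by move=> D0 v; apply/esym/subr0_eq; rewrite -defectBE D0. Qed.

Lemma defectBC (D0 : D =1 \0) v :
  T (actC q p v) - actC q p' (T v) = (gamma_sc p - gamma_sc p') *: T v.
Proof.
rewrite /actC !(linearB T, linearZ_LR T) /= !transferA !(transferB D0) !transferA.
by rewrite -!mul_polyC; ring.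
Qed.

Lemma transfer_is_hom : hom_data p = hom_data p' -> is_hom q p p' T.
Proof.
move=> [= eq0 eq1 eqt eqg eqb].
have [D1 DX] : D 1 = 0 /\ D 'X = 0 by apply/defectB01P.
have D0 := defectB_eq0 eqg eqb D1 DX.
split=> [k u v|v|v|v]; [exact: linearP | exact: transferA | exact: transferB |].
by apply/subr0_eq; rewrite defectBC // eqg subrr scale0r.
Qed.

Lemma hom_data_of_hom f : is_hom q p p' f -> f 1 = 1 -> hom_data p = hom_data p'.
Proof.
move=> [flin fA fB fC] f1.
pose fL : {linear {poly F} -> {poly F}} :=
  HB.pack f (GRing.isLinear.Build F {poly F} {poly F} *:%R f flin).
have fT : f =1 T := intertwinerA_unique (f := fL) fA f1.
have D0 : D =1 \0 by move=> v; rewrite defectBE /= -!fT fB subrr.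
have [eq0 eq1 eqt] := defectB01P.1 (conj (D0 1) (D0 'X)).
have eqg : gammav q p = gammav q p'.
  apply: (mulIf (invr_neq0 qDqV_neq0)); apply/subr0_eq; apply: scale1_poly_eq0.
  by rewrite -(transfer1 q p p') -defectBC // -!fT fC subrr.
have eqb : betav p = betav p'.
  apply: (mulIf (invr_neq0 qDqV_neq0)); apply/esym/subr0_eq.
  apply: (mulfI (expf_neq0 2 kap_neq0)); rewrite mulr0; apply: scale1_poly_eq0.
  have := defectB_rel 1; rewrite !D0 /= eqg subrr transfer1 mulr0 scale0r.
  by rewrite !(linear0 A', scaler0, add0r, addr0, subr0) oppr0 => <-.
by rewrite /hom_data eq0 eq1 eqt eqg eqb.
Qed.

Lemma hom_iff_hom_data :
  (exists f, is_hom q p p' f /\ f 1 = 1) <-> hom_data p = hom_data p'.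
Proof.
split=> [[f [fhom f1]]|eqh]; first exact: hom_data_of_hom fhom f1.
by exists T; split; [exact: transfer_is_hom | exact: transfer1].
Qed.

Lemma iso_iff_hom_data :
  (exists f, is_iso q p p' f /\ f 1 = 1) <-> hom_data p = hom_data p'.
Proof.
split=> [[f [[fhom _] f1]]|eqh]; first exact: hom_data_of_hom fhom f1.
exists T; split; last exact: transfer1.
by split; [exact: transfer_is_hom | exact: transfer_bij].
Qed.

End Transfer.
End Module.

Section SymmetricFunctions.
Variable R : comNzRingType.

Definition esym1 (u : seq R) := if u is [:: u1; u2; u3; u4] then u1 + u2 + u3 + u4 else 0.
Definition esym2 (u : seq R) := if u is [:: u1; u2; u3; u4] then
  u1 * u2 + u1 * u3 + u1 * u4 + u2 * u3 + u2 * u4 + u3 * u4 else 0.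
Definition esym3 (u : seq R) := if u is [:: u1; u2; u3; u4] then
  u1 * u2 * u3 + u1 * u2 * u4 + u1 * u3 * u4 + u2 * u3 * u4 else 0.

Lemma prod_XsubC4 (u1 u2 u3 u4 : R) (u := [:: u1; u2; u3; u4]) :
  \prod_(z <- u) ('X - z%:P) =
  'X^4 - (esym1 u)%:P * 'X^3 + (esym2 u)%:P * 'X^2 - (esym3 u)%:P * 'X
  + (u1 * u2 * u3 * u4)%:P.
Proof. by rewrite !big_cons big_nil /=; ring. Qed.

Lemma esym_perm (u v : seq R) : size u = 4 -> perm_eq u v ->
  [/\ esym1 u = esym1 v, esym2 u = esym2 v & esym3 u = esym3 v].
Proof.
move=> su uv; have sv := perm_size uv; rewrite su in sv.
case: u v su sv uv => [|u1 [|u2 [|u3 [|u4 [|]]]]] // [|v1 [|v2 [|v3 [|v4 [|]]]]] // _ _ uv.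
have : \prod_(z <- [:: u1; u2; u3; u4]) ('X - z%:P)
       = \prod_(z <- [:: v1; v2; v3; v4]) ('X - z%:P) := perm_big _ uv.
rewrite !prod_XsubC4 => eq_prod.
have coef k := congr1 (coefp k) eq_prod.
move: (coef 3%N) (coef 2%N) (coef 1%N) => /=.
rewrite !(coefD, coefB, coefN, coefCM, coefXn, coefX, coefC) /=.
by rewrite !(mulr0, mulr1, add0r, addr0, subr0, sub0r, oppr0) => /oppr_inj ? ? /oppr_inj.
Qed.

End SymmetricFunctions.

Lemma perm_swap (T : eqType) (s1 s2 : seq T) x y :
  perm_eq (s1 ++ x :: y :: s2) (s1 ++ y :: x :: s2).
Proof. by rewrite perm_cat2l (perm_catCA [:: x] [:: y]). Qed.

Lemma perm_eq_adjacent_ind (T : eqType) (P : seq T -> Prop) :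
  (forall s1 s2 x y, P (s1 ++ x :: y :: s2) -> P (s1 ++ y :: x :: s2)) ->
  forall s t, perm_eq s t -> P s -> P t.
Proof.
have to_front (Q : seq T -> Prop) s1 y s2 :
    (forall s1 s2 x y, Q (s1 ++ x :: y :: s2) -> Q (s1 ++ y :: x :: s2)) ->
    Q (s1 ++ y :: s2) -> Q (y :: s1 ++ s2).
  elim: s1 Q => [//|z s1 IH] Q Qswap Qs.
  apply: (Qswap [::]); apply: (IH (fun u => Q (z :: u))) => // u1 u2 x w.
  exact: (Qswap (z :: u1)).
move=> Pswap s t; elim: t s P Pswap => [|y t IH] s P Pswap; first by move/perm_nilP ->.
move=> est Ps; have ys : y \in s by rewrite (perm_mem est) mem_head.
move: est Ps; case/splitPr: ys => s1 s2 est /(to_front _ _ _ _ Pswap) Py.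
apply: (IH (s1 ++ s2) (fun u => P (y :: u))) => // [u1 u2 x w|].
  exact: (Pswap (y :: u1)).
by rewrite -(perm_cons y) (perm_trans _ est) // -cat1s perm_catCA.
Qed.

Lemma addrV_scale_inj (K : fieldType) (k x y : K) : k != 0 -> k ^+ 2 != 1 ->
  x != 0 -> y != 0 -> x + x^-1 = y + y^-1 -> x * k + (x * k)^-1 = y * k + (y * k)^-1 ->
  x = y.
Proof.
move=> hk hk2 hx hy e1 e2; apply/eqP; apply: contraNT hk2 => neq_xy.
have hxy : x - y != 0 by rewrite subr_eq0.
have f1 : (x - y) * (x * y - 1) = x * y * ((x + x^-1) - (y + y^-1)).
  by field; rewrite hx hy.
have f2 : (x - y) * (k ^+ 2 * x * y - 1)
    = x * y * k * ((x * k + (x * k)^-1) - (y * k + (y * k)^-1)).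
  by field; rewrite hx hy hk.
rewrite e1 subrr mulr0 in f1; rewrite e2 subrr mulr0 in f2.
move/eqP: f1; rewrite mulf_eq0 (negbTE hxy) subr_eq0 => /eqP xy1.
by move/eqP: f2; rewrite mulf_eq0 (negbTE hxy) subr_eq0 -mulrA xy1 mulr1.
Qed.

Lemma closed_sqrt (F : closedFieldType) (z : F) : exists s, s ^+ 2 = z.
Proof.
have [s hs] := @solve_monicpoly F 2 (nth 0 [:: z]) isT.
by exists s; rewrite hs !big_ord_recl big_ord0 mul0r mulr1 !addr0.
Qed.

Section Invariants.
Variables (F : closedFieldType) (q : F).
Hypotheses (hq : q != 0) (hq4 : q ^+ 4 != 1).
Implicit Types (p r : par F) (x : F).

Definition nzpar p := [/\ pa p != 0, pb p != 0, pc p != 0 & pl p != 0].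
Definition xb p := pb p / pl p.
(* Ordered so that (1 2), (2 3), (3 4) swap the corresponding adjacent entries. *)
Definition useq p := [:: pc p / pl p; (pc p * pl p)^-1; pa p * pb p * q; pb p * q / pa p].
Definition sym_data p := (xb p, esym1 (useq p), esym2 (useq p), esym3 (useq p)).

Definition sym_hom_data (d : F * F * F * F) :=
  let: (x, e1, e2, e3) := d in
  (x + x^-1, x * q ^+ 2 + (x * q ^+ 2)^-1,
   (q - q^-1) * (e3 - x ^+ 2 * q ^+ 2 * e1) / (x ^+ 2 * q ^+ 2),
   (e1 + e3 / x ^+ 2) / q, (e2 + x ^+ 2 + q ^+ 2) / (x * q)).

Lemma xb_neq0 p : nzpar p -> xb p != 0.
Proof. by case=> _ hb _ hl; rewrite mulf_neq0 ?invr_eq0. Qed.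

Lemma hom_dataE p : nzpar p -> hom_data q p = sym_hom_data (sym_data p).
Proof.
case: p => [[[a b] c] l] [/= ha hb hc hl].
rewrite /hom_data /tau /sym_hom_data /sym_data /xb /useq /theta /thetas /phi /gammav /betav.
rewrite /pa /pb /pc /pl /= ?muln0 ?muln1 ?expr0 ?expr1.
by congr (_, _, _, _, _); field; rewrite -?expr2 ?sqrqD1_neq0 ?hq ?ha ?hb ?hc ?hl ?oner_neq0.
Qed.

Lemma sym_hom_data_inj x e1 e2 e3 x' e1' e2' e3' : x != 0 -> x' != 0 ->
  sym_hom_data (x, e1, e2, e3) = sym_hom_data (x', e1', e2', e3') ->
  (x, e1, e2, e3) = (x', e1', e2', e3').
Proof.
move=> hx hx' [eq0 eq1 eqt eqg eqb].
have exx : x = x'.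
  by apply: (addrV_scale_inj (k := q ^+ 2)); rewrite ?expf_neq0 // -exprM.
subst x'; have hxq : x * q != 0 by rewrite mulf_neq0.
have e22 : e2 = e2' by move/(mulIf (invr_neq0 hxq))/addIr/addIr: eqb.
have e11 : e1 = e1'.
  have key : (e1 - e1') * (x ^+ 2 * (q ^+ 2 + 1))
      = x ^+ 2 * q * ((e1 + e3 / x ^+ 2) / q - (e1' + e3' / x ^+ 2) / q)
      - x ^+ 2 * q ^+ 2 / (q - q^-1)
        * ((q - q^-1) * (e3 - x ^+ 2 * q ^+ 2 * e1) / (x ^+ 2 * q ^+ 2)
           - (q - q^-1) * (e3' - x ^+ 2 * q ^+ 2 * e1') / (x ^+ 2 * q ^+ 2)).
    by field; rewrite -?expr2 hq hx sqrqB1_neq0.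
  move: key; rewrite eqg eqt !subrr !mulr0 subr0 => /eqP.
  have nz : x ^+ 2 * (q ^+ 2 + 1) != 0 by rewrite mulf_neq0 ?expf_neq0 ?sqrqD1_neq0.
  by rewrite mulf_eq0 (negbTE nz) orbF subr_eq0 => /eqP.
have e33 : e3 = e3'.
  move: eqg; rewrite e11 => /(mulIf (invr_neq0 hq))/addrI.
  exact: (mulIf (invr_neq0 (expf_neq0 2 hx))).
by rewrite e11 e22 e33.
Qed.

Lemma hom_data_eq p p' : nzpar p -> nzpar p' ->
  hom_data q p = hom_data q p' <-> sym_data p = sym_data p'.
Proof.
move=> np np'; rewrite !hom_dataE //; split=> [|-> //].
by apply: sym_hom_data_inj; apply: xb_neq0.
Qed.

Definition sym_poly (d : F * F * F * F) : {poly F} :=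
  let: (x, e1, e2, e3) := d in
  'X^4 - e1%:P * 'X^3 + e2%:P * 'X^2 - e3%:P * 'X + ((x * q) ^+ 2)%:P.

Lemma prod_useq p : nzpar p -> \prod_(z <- useq p) ('X - z%:P) = sym_poly (sym_data p).
Proof.
case: p => [[[a b] c] l] [/= ha hb hc hl]; rewrite prod_XsubC4 /xb /=.
by congr (_ + _%:P); field; rewrite ha hc hl.
Qed.

Lemma sym_data_eq p p' : nzpar p -> nzpar p' ->
  sym_data p = sym_data p' <-> xb p = xb p' /\ perm_eq (useq p) (useq p').
Proof.
move=> np np'; split=> [eqs|[exb pu]].
  split; first by case: eqs.
  by apply: prod_XsubC_eq; rewrite !prod_useq // eqs.
have [e1 e2 e3] := esym_perm (erefl : size (useq p) = 4%N) pu.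
by rewrite /sym_data exb e1 e2 e3.
Qed.

Section Generators.
Variables (a b c l : F).
Hypothesis nzp : nzpar (a, b, c, l).

Lemma par_neg : [/\ nzpar (- a, - b, - c, - l), xb (- a, - b, - c, - l) = xb (a, b, c, l)
  & useq (- a, - b, - c, - l) = useq (a, b, c, l)].
Proof.
case: nzp => /= ha hb hc hl; split; rewrite /nzpar /xb /useq /pa /pb /pc /pl /= ?oppr_eq0 //.
  by rewrite invrN mulrNN.
by congr [:: _; _; _; _]; field; rewrite ?oppr_eq0 ?ha ?hb ?hc ?hl.
Qed.

Lemma par_invc : [/\ nzpar (a, b, c^-1, l), xb (a, b, c^-1, l) = xb (a, b, c, l)
  & useq (a, b, c^-1, l) = [:: (c * l)^-1; c / l; a * b * q; b * q / a]].
Proof.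
case: nzp => /= ha hb hc hl; split; rewrite /nzpar /xb /useq /pa /pb /pc /pl /= ?invr_eq0 //.
by congr [:: _; _; _; _]; field; rewrite ?hc ?hl.
Qed.

Lemma par_inva : [/\ nzpar (a^-1, b, c, l), xb (a^-1, b, c, l) = xb (a, b, c, l)
  & useq (a^-1, b, c, l) = [:: c / l; (c * l)^-1; b * q / a; a * b * q]].
Proof.
case: nzp => /= ha hb hc hl; split; rewrite /nzpar /xb /useq /pa /pb /pc /pl /= ?invr_eq0 //.
by congr [:: _; _; _; _]; field; rewrite ?ha ?oner_neq0.
Qed.

Lemma par_div s : s ^+ 2 = a * b * c * l * q ->
  [/\ nzpar (a / s, b / s, c / s, l / s), xb (a / s, b / s, c / s, l / s) = xb (a, b, c, l)
  & useq (a / s, b / s, c / s, l / s) = [:: c / l; a * b * q; (c * l)^-1; b * q / a]].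
Proof.
case: nzp => /= ha hb hc hl hs.
have : a * b * c * l * q != 0 by rewrite !mulf_neq0.
rewrite -hs expf_eq0 /= => s0.
split; rewrite /nzpar /xb /useq /pa /pb /pc /pl /= ?mulf_neq0 ?invr_eq0 //.
  by field; rewrite s0 hl.
congr [:: _; _; _; _]; first by field; rewrite s0 hl.
- have -> : (c / s * (l / s))^-1 = s ^+ 2 / (c * l) by field; rewrite s0 hc hl.
  by rewrite hs; field; rewrite hc hl.
- have -> : a / s * (b / s) * q = a * b * q / s ^+ 2 by field; rewrite s0.
  by rewrite hs; field; rewrite ha hb hc hl hq.
- by field; rewrite s0 ha.
Qed.

End Generators.

Lemma approx_step_inv r r' : nzpar r -> approx_step q r r' ->
  [/\ nzpar r', xb r' = xb r & perm_eq (useq r) (useq r')].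
Proof.
case: r => [[[a b] c] l] nzr; case=> [->|->|->|[s [hs ->]]].
- by have [? ? ->] := par_neg nzr.
- by have [? ? ->] := par_invc nzr; split=> //; exact: (perm_swap [::]).
- by have [? ? ->] := par_inva nzr; split=> //; exact: (perm_swap [:: _; _]).
- by have [? ? ->] := par_div nzr hs; split=> //; exact: (perm_swap [:: _]).
Qed.

Lemma approx_inv r r' : approx q r r' -> nzpar r ->
  [/\ nzpar r', xb r' = xb r & perm_eq (useq r) (useq r')].
Proof.
elim=> {r r'} [r r' /approx_step_inv //|r nzr|r1 r2 r3 _ IH12 _ IH23 nzr1] //.
have [nzr2 x21 p12] := IH12 nzr1; have [nzr3 x32 p23] := IH23 nzr2.
by split=> //; [rewrite x32 | exact: perm_trans p12 p23].
Qed.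

Lemma approx_useq_perm r s : nzpar r -> perm_eq (useq r) s ->
  exists2 r', approx q r r' & [/\ nzpar r', xb r' = xb r & useq r' = s].
Proof.
move=> nzr rs; pose reach u := exists2 r', approx q r r' &
  [/\ nzpar r', xb r' = xb r & useq r' = u].
apply: (perm_eq_adjacent_ind (P := reach) _ rs); last by exists r; first exact: rt_refl.
move=> s1 s2 x y [[[[a b] c] l] hr' [nzr' xr' us]].
suff [r'' st [nzr'' xr'' ur'']] : exists2 r'', approx_step q (a, b, c, l) r'' &
    [/\ nzpar r'', xb r'' = xb (a, b, c, l) & useq r'' = s1 ++ y :: x :: s2].
  by exists r''; [exact: rt_trans hr' (rt_step _ _ _ _ st) | rewrite xr'' xr'].
move: us; rewrite {1}/useq /pa /pb /pc /pl /=.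
case: s1 => [|z1 [|z2 [|z3 s1]]] /=.
- case=> <- <- <-; exists (a, b, c^-1, l); last exact: par_invc.
  by apply: Or42.
- case=> <- <- <- <-; have [w hw] := closed_sqrt (a * b * c * l * q).
  exists (a / w, b / w, c / w, l / w); last exact: par_div.
  by apply: Or44; exists w.
- case=> <- <- <- <- <-; exists (a^-1, b, c, l); last exact: par_inva.
  by apply: Or43.
- by case=> _ _ _ /(congr1 size); rewrite size_cat /= !addnS.
Qed.

Lemma useq_inj_approx r r' : nzpar r -> nzpar r' -> xb r = xb r' -> useq r = useq r' ->
  approx q r r'.
Proof.
case: r r' => [[[a b] c] l] [[[a' b'] c'] l'].
rewrite /nzpar /xb /useq /pa /pb /pc /pl /=.
move=> [ha hb hc hl] [ha' hb' hc' hl'] exb [e1 e2 e3 _].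
have sql : l' ^+ 2 = l ^+ 2.
  apply: invr_inj.
  have -> : (l ^+ 2)^-1 = c / l * (c * l)^-1 by field; rewrite hc hl.
  have -> : (l' ^+ 2)^-1 = c' / l' * (c' * l')^-1 by field; rewrite hc' hl'.
  by rewrite e1 e2.
have hbq : b * q != 0 by rewrite mulf_neq0.
have /orP [/eqP el|/eqP el] : (l' == l) || (l' == - l) by rewrite -eqf_sqr sql.
- have eb : b' = b by apply: (mulIf (invr_neq0 hl)); rewrite exb el.
  have ec : c' = c by apply: (mulIf (invr_neq0 hl)); rewrite e1 el.
  have ea : a' = a by apply: (mulIf hbq); rewrite !mulrA e3 eb.
  by rewrite ea eb ec el; apply: rt_refl.
- have eb : b' = - b.
    by apply: (mulIf (invr_neq0 hl)); rewrite mulNr exb el invrN mulrN opprK.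
  have ec : c' = - c.
    by apply: (mulIf (invr_neq0 hl)); rewrite mulNr e1 el invrN mulrN opprK.
  have ea : a' = - a by apply: (mulIf hbq); rewrite mulNr !mulrA e3 eb; ring.
  by rewrite ea eb ec el; apply: rt_step; apply: Or41.
Qed.

Lemma approx_iff_hom_data p p' : nzpar p -> nzpar p' ->
  approx q p p' <-> hom_data q p = hom_data q p'.
Proof.
move=> np np'; rewrite hom_data_eq // sym_data_eq //.
split=> [/approx_inv/(_ np) [_ <- pp'] //|[exb /(approx_useq_perm np) [r pr [nzr xr ur]]]].
by apply: rt_trans pr (useq_inj_approx nzr np' _ ur); rewrite xr.
Qed.

End Invariants.

Lemma prim_root_neq0_exp4 (F : fieldType) (d : nat) (q : F) :
  d.-primitive_root q -> [/\ d != 1, d != 2 & d != 4]%N -> q != 0 /\ q ^+ 4 != 1.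
Proof.
move=> hq [d1 d2 d4]; have d_gt0 := prim_order_gt0 hq; split.
  apply/eqP => q0; have := prim_expr_order hq.
  by rewrite q0 expr0n eqn0Ngt d_gt0 => /esym/eqP; rewrite oner_eq0.
rewrite -(prim_order_dvd hq) (dvdn_divisors _ (isT : (0 < 4)%N)) !inE /=.
by rewrite (negbTE d1) (negbTE d2) (negbTE d4).
Qed.

Theorem theorem7p1 (F : closedFieldType) (q : F) (d : nat)
  (hq : d.-primitive_root q) (hd : [/\ d != 1%N, d != 2%N & d != 4%N])
  (a b c l a' b' c' l' : F)
  (ha : a != 0) (hb : b != 0) (hc : c != 0) (hl : l != 0)
  (ha' : a' != 0) (hb' : b' != 0) (hc' : c' != 0) (hl' : l' != 0) :
  [<-> approx q (a, b, c, l) (a', b', c', l');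
       exists f, is_hom q (a, b, c, l) (a', b', c', l') f /\ f 1 = 1;
       exists f, is_hom q (a', b', c', l') (a, b, c, l) f /\ f 1 = 1;
       exists f, is_iso q (a, b, c, l) (a', b', c', l') f /\ f 1 = 1;
       exists f, is_iso q (a', b', c', l') (a, b, c, l) f /\ f 1 = 1].
Proof.
have [hq0 hq4] := prim_root_neq0_exp4 hq hd.
have nzp : nzpar (a, b, c, l) by split.
have nzp' : nzpar (a', b', c', l') by split.
have approxE := approx_iff_hom_data hq0 hq4 nzp nzp'.
have homE := hom_iff_hom_data hq0 hq4 ha hb hc hl ha' hb' hc' hl'.
have homE' := hom_iff_hom_data hq0 hq4 ha' hb' hc' hl' ha hb hc hl.
have isoE := iso_iff_hom_data hq0 hq4 ha hb hc hl ha' hb' hc' hl'.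
have isoE' := iso_iff_hom_data hq0 hq4 ha' hb' hc' hl' ha hb hc hl.
tfae=> [/approxE/homE | /homE/esym/homE' | /homE'/esym/isoE | /isoE/esym/isoE'
       | /isoE'/esym/approxE] //.
Qed.
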